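(* Assume (A1) and (A2) below. Then for any $s\in\mathcal S$ and policy $\pi$, $$\Big(\mathbb{E}_{p_s\sim\Phi_{s,t}}\Big[\mathbb{E}_{p\sim\Phi_t}\Big[\sum_{a,s'}p(a,s'\mid s)V^{\pi,p}(s')\;\Big|\;\mathbf P_s\Big]\Big]\Big)^2=\sum_{a,s'}\bar p_t(a,s'\mid s)\big(\bar V^\pi_t(s')\big)^2-\mathbb{V}_{a,s'\sim\pi,\bar p_t}\big[\bar V^\pi_t(s')\big].$$
   Context: Let $\mathcal S$ be a finite state space, $\mathcal A$ a finite action space, $r:\mathcal S\times\mathcal A\to\mathbb R$ a known bounded (deterministic) reward function and $\gamma\in[0,1)$ a discount factor. A transition function $p$ assigns to each $(s,a)$ a probability distribution $p(\cdot\mid s,a)$ on $\mathcal S$. A policy $\pi$ gives distributions $\pi(\cdot\mid s)$ on $\mathcal A$; write $p(a,s'\mid s)=\pi(a\mid s)p(s'\mid s,a)$. For a transition function $p$, the value function is $V^{\pi,p}(s)=\mathbb E\big[\sum_{h\ge 0}\gamma^h r(s_h,a_h)\mid s_0=s\big]$ with $a_h\sim\pi(\cdot\mid s_h)$, $s_{h+1}\sim p(\cdot\mid s_h,a_h)$. The transition function $p$ is a random variable with distribution $\Phi_t$; $\bar p_t(s'\mid s,a)=\mathbb E_{p\sim\Phi_t}[p(s'\mid s,a)]$, $\bar p_t(a,s'\mid s)=\pi(a\mid s)\bar p_t(s'\mid s,a)$, $\bar V^\pi_t(s)=\mathbb E_{p\sim\Phi_t}[V^{\pi,p}(s)]$.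 For a transition function $q$ and a function $f$ on $\mathcal S$, $\mathbb V_{a,s'\sim\pi,q}[f(s')]$ denotes the variance of $f(s')$ when $a\sim\pi(\cdot\mid s)$ and $s'\sim q(\cdot\mid s,a)$. For fixed $s$, $p_s$ denotes the map $a\mapsto p(\cdot\mid s,a)$, $\mathbf P_s=\{p_s(s'\mid a)\}_{s'\in\mathcal S,a\in\mathcal A}$, and $\Phi_{s,t}$ is the marginal of $\Phi_t$ on the transitions starting from $s$. Assumptions: (A1) (independent transitions) $p(s'\mid x,a)$ and $p(s'\mid y,a)$ are independent random variables if $x\neq y$; (A2) (acyclic MDP) the MDP is a directed acyclic graph, i.e., states are not visited more than once in any given episode. *)

From HB Require Import structures.
From mathcomp Require Import all_boot all_order all_algebra.
From mathcomp Require Import all_classical all_reals all_analysis.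
Set Implicit Arguments. Unset Strict Implicit. Unset Printing Implicit Defensive.
Import Order.TTheory GRing.Theory Num.Theory.
Import numFieldNormedType.Exports.
Local Open Scope classical_set_scope.
Local Open Scope ring_scope.

Definition is_policy (R : realType) (S A : finType) (pi : S -> A -> R) : Prop :=
  (forall x a, 0 <= pi x a) /\ (forall x, \sum_(a : A) pi x a = 1).

Definition is_transition (R : realType) (S A : finType) (q : S -> A -> S -> R) : Prop :=
  (forall x a y, 0 <= q x a y) /\ (forall x a, \sum_(y : S) q x a y = 1).

Definition rew_pi (R : realType) (S A : finType) (pi : S -> A -> R) (r : S -> A -> R)
  (x : S) : R := \sum_(a : A) pi x a * r x a.

Definition step_pi (R : realType) (S A : finType) (pi : S -> A -> R)
  (q : S -> A -> S -> R) (f : S -> R) : S -> R :=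
  fun x => \sum_(a : A) pi x a * \sum_(y : S) q x a y * f y.

(* V^{pi,q}(s) = E[ sum_h gamma^h r(s_h,a_h) | s_0 = s ]
   = sum_{h>=0} gamma^h E[r(s_h,a_h)], written as the limit of partial sums. *)
Definition value (R : realType) (S A : finType) (pi : S -> A -> R) (r : S -> A -> R)
  (gamma : R) (q : S -> A -> S -> R) (s : S) : R :=
  limn (fun n => \sum_(h < n) gamma ^+ h * iter h (step_pi pi q) (rew_pi pi r) s).

(* sigma-algebra generated by P_x = {p(y|x,a)}_{y,a}, the transitions from x *)
Definition sigma_trans (R : realType) (S A : finType) (d : measure_display)
  (T : measurableType d) (p : T -> S -> A -> S -> R) (x : S) : set (set T) :=
  <<s [set E | exists (a : A) (y : S) (B : set R),
          measurable B /\ E = (fun w => p w x a y) @^-1` B] >>.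

(* (A1) the transitions from different states are (mutually) independent:
   the sigma-algebras sigma(P_x), x in S, are mutually independent. *)
Definition indep_transitions (R : realType) (S A : finType) (d : measure_display)
  (T : measurableType d) (P : probability T R) (p : T -> S -> A -> S -> R) : Prop :=
  forall E : S -> set T, (forall x, sigma_trans p x (E x)) ->
    P (\bigcap_(x in [set: S]) E x) = (\prod_(x : S) P (E x))%E.

Definition mdp_edge (R : realType) (S A : finType) (T : Type)
  (p : T -> S -> A -> S -> R) : rel S :=
  fun x y => `[< x != y /\ exists (w : T) (a : A), 0 < p w x a y >].

(* (A2) acyclic MDP: the transition graph has no directed cycle; the only
   allowed self-transitions are those of terminal (absorbing) states, where the
   episode ends: such a state loops to itself with probability one. *)
Definition acyclic_mdp (R : realType) (S A : finType) (T : Type)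
  (p : T -> S -> A -> S -> R) : Prop :=
  (forall x y, mdp_edge p x y -> ~~ connect (mdp_edge p) y x) /\
  (forall w x a, 0 < p w x a x -> forall w' a', p w' x a' x = 1).

Definition is_cond_exp (R : realType) (d : measure_display) (T : measurableType d)
  (P : probability T R) (F : set (set T)) (Y Z : T -> R) : Prop :=
  (forall B : set R, measurable B -> F (Z @^-1` B)) /\
  P.-integrable setT (EFin \o Z) /\
  (forall E, F E -> (\int[P]_(w in E) (Z w)%:E = \int[P]_(w in E) (Y w)%:E)%E).

Definition pbar (R : realType) (S A : finType) (d : measure_display)
  (T : measurableType d) (P : probability T R) (p : T -> S -> A -> S -> R)
  (x : S) (a : A) (y : S) : R := fine ('E_P[fun w => p w x a y])%E.

Definition Vbar (R : realType) (S A : finType) (d : measure_display)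
  (T : measurableType d) (P : probability T R) (p : T -> S -> A -> S -> R)
  (pi : S -> A -> R) (r : S -> A -> R) (gamma : R) (y : S) : R :=
  fine ('E_P[fun w => value pi r gamma (p w) y])%E.

Definition var_pi (R : realType) (S A : finType) (pi : S -> A -> R)
  (q : S -> A -> S -> R) (s : S) (f : S -> R) : R :=
  let m := \sum_(a : A) \sum_(y : S) pi s a * q s a y * f y in
  \sum_(a : A) \sum_(y : S) pi s a * q s a y * (f y - m) ^+ 2.

From HB Require Import structures.
From mathcomp Require Import all_boot all_order all_algebra.
From mathcomp Require Import all_classical all_reals all_analysis.
From mathcomp Require Import measurable_realfun ring lra.
Import Order.TTheory GRing.Theory Num.Theory.
Import numFieldNormedType.Exports.
Local Open Scope classical_set_scope.
Local Open Scope ring_scope.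

(* By the tower property the left-hand side is the square of E[Y] with
   Y = sum_(a,y) pi(a|s) p(y|s,a) V^{pi,p}(y), and each summand factorises as
   pbar(y|s,a) Vbar(y): p(y|s,a) is sigma(P_s)-measurable, whereas a successor y
   of s cannot lead back to s (A2), so V^{pi,p}(y) only depends on the
   transitions out of the other states, which are independent of P_s (A1); in
   the remaining case y = s, the state s is absorbing and V^{pi,p}(s) is
   deterministic.  The product rule for independent sigma-algebras is obtained
   by uniform approximation with step functions, and the independence of P_s
   from the sigma-algebra generated by all other states by the pi-lambda
   theorem.  What is left is the identity (E f)^2 = E f^2 - Var f for the
   weights pi(a|s) pbar(y|s,a), which sum to one. *)

Section bounded_expectation.
Context {d : measure_display} {T : measurableType d} {R : realType}.
Variable P : probability T R.

Definition bounded_measurable (f : T -> R) :=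
  measurable_fun setT f /\ exists M, forall w, `|f w| <= M.

Definition expectR (f : T -> R) : R := fine 'E_P[f].

Lemma expectRE f : expectR f = \int[P]_(w in setT) f w.
Proof. by rewrite /expectR unlock. Qed.

Lemma bounded_measurable_integrable f :
  bounded_measurable f -> P.-integrable setT (EFin \o f).
Proof.
move=> [mf [M fM]]; apply: measurable_bounded_integrable => //.
  by rewrite (le_lt_trans (probability_le1 P measurableT)) ?ltry.
exists M; split; first exact: num_real.
by move=> M' MM' w _; exact: le_trans (fM w) (ltW MM').
Qed.

Lemma bounded_measurable_cst c : bounded_measurable (fun=> c).
Proof. by split; [exact: measurable_cst | exists `|c|]. Qed.

Lemma bounded_measurable_indic A : measurable A -> bounded_measurable \1_A.
Proof.
move=> mA; split; first exact: measurable_indic.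
by exists 1 => w; rewrite /indic; case: (w \in A); rewrite ?normr1 ?normr0.
Qed.

Lemma bounded_measurableD {f g} : bounded_measurable f -> bounded_measurable g ->
  bounded_measurable (fun w => f w + g w).
Proof.
move=> [mf [M fM]] [mg [N gN]]; split; first exact: measurable_funD.
by exists (M + N) => w; rewrite (le_trans (ler_normD _ _)) ?lerD.
Qed.

Lemma bounded_measurableB {f g} : bounded_measurable f -> bounded_measurable g ->
  bounded_measurable (fun w => f w - g w).
Proof.
move=> [mf [M fM]] [mg [N gN]]; split; first exact: measurable_funB.
by exists (M + N) => w; rewrite (le_trans (ler_normB _ _)) ?lerD.
Qed.

Lemma bounded_measurableM {f g} : bounded_measurable f -> bounded_measurable g ->
  bounded_measurable (fun w => f w * g w).
Proof.
move=> [mf [M fM]] [mg [N gN]]; split; first exact: measurable_funM.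
by exists (M * N) => w; rewrite normrM ler_pM.
Qed.

Lemma bounded_measurableZl c f : bounded_measurable f ->
  bounded_measurable (fun w => c * f w).
Proof. exact: bounded_measurableM (bounded_measurable_cst c). Qed.

Lemma bounded_measurable_sum I (s : seq I) (f : I -> T -> R) :
  (forall i, bounded_measurable (f i)) ->
  bounded_measurable (fun w => \sum_(i <- s) f i w).
Proof.
move=> bf; elim: s => [|i s IHs].
  by under eq_fun do rewrite big_nil; exact: bounded_measurable_cst.
by under eq_fun do rewrite big_cons; exact: bounded_measurableD.
Qed.

Lemma expectR_cst c : expectR (fun=> c) = c.
Proof. by rewrite /expectR (expectation_cst P c). Qed.

Lemma expectR_indic A : measurable A -> expectR \1_A = fine (P A).
Proof. by move=> mA; rewrite /expectR expectation_indic. Qed.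

Lemma expectRD f g : bounded_measurable f -> bounded_measurable g ->
  expectR (fun w => f w + g w) = expectR f + expectR g.
Proof.
by move=> bf bg; rewrite !expectRE RintegralD // bounded_measurable_integrable.
Qed.

Lemma expectRB f g : bounded_measurable f -> bounded_measurable g ->
  expectR (fun w => f w - g w) = expectR f - expectR g.
Proof.
by move=> bf bg; rewrite !expectRE RintegralB // bounded_measurable_integrable.
Qed.

Lemma expectRZl c f : bounded_measurable f ->
  expectR (fun w => c * f w) = c * expectR f.
Proof.
by move=> bf; rewrite !expectRE RintegralZl // bounded_measurable_integrable.
Qed.

Lemma expectR_sum I (s : seq I) (f : I -> T -> R) :
  (forall i, bounded_measurable (f i)) ->
  expectR (fun w => \sum_(i <- s) f i w) = \sum_(i <- s) expectR (f i).
Proof.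
move=> bf; elim: s => [|i s IHs].
  by under eq_fun do rewrite big_nil; rewrite big_nil expectR_cst.
under eq_fun do rewrite big_cons.
by rewrite expectRD ?big_cons ?IHs //; exact: bounded_measurable_sum.
Qed.

Lemma normr_expectR_le f c : bounded_measurable f -> (forall w, `|f w| <= c) ->
  `|expectR f| <= c.
Proof.
move=> bf fc; rewrite expectRE.
rewrite (le_trans (le_normr_Rintegral _ _)) ?bounded_measurable_integrable //.
rewrite -[leRHS](expectR_cst c) expectRE le_Rintegral //.
- by apply: bounded_measurable_integrable; case: bf => mf [M fM]; split;
    [exact: measurableT_comp | exists M => w; rewrite normr_id].
- exact: bounded_measurable_integrable (bounded_measurable_cst c).
Qed.

End bounded_expectation.

Section step_functions.
Context {d : measure_display} {T : measurableType d} {R : realType}.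
Variable P : probability T R.

Definition measurable_wrt (F : set (set T)) (f : T -> R) :=
  forall B : set R, measurable B -> F (f @^-1` B).

Definition step_fun (F : set (set T)) (h : T -> R) :=
  exists n (c : 'I_n -> R) (A : 'I_n -> set T),
    (forall i, F (A i)) /\ h = fun w => \sum_(i < n) c i * \1_(A i) w.

Lemma measurable_wrt_measurable_fun F f : F `<=` measurable ->
  measurable_wrt F f -> measurable_fun setT f.
Proof. by move=> Fm Ff _ B mB; rewrite setTI; apply/Fm/Ff. Qed.

Lemma bounded_measurable_step_fun n (c : 'I_n -> R) (A : 'I_n -> set T) :
  (forall i, measurable (A i)) ->
  bounded_measurable (fun w => \sum_(i < n) c i * \1_(A i) w).
Proof.
move=> mA; apply: bounded_measurable_sum => i.
exact/bounded_measurableZl/bounded_measurable_indic.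
Qed.

Lemma expectR_step_fun n (c : 'I_n -> R) (A : 'I_n -> set T) :
  (forall i, measurable (A i)) ->
  expectR P (fun w => \sum_(i < n) c i * \1_(A i) w) = \sum_(i < n) c i * fine (P (A i)).
Proof.
move=> mA; rewrite expectR_sum; last first.
  by move=> i; exact/bounded_measurableZl/bounded_measurable_indic.
apply: eq_bigr => i _.
by rewrite expectRZl ?expectR_indic //; exact: bounded_measurable_indic.
Qed.

Lemma step_fun_approx {F h M e} : measurable_wrt F h ->
  (forall w, `|h w| <= M) -> 0 < e ->
  exists2 g, step_fun F g & forall w, `|h w - g w| <= e.
Proof.
move=> Fh hM e0.
have M0 : 0 <= M by rewrite (le_trans _ (hM point)).
pose m := Num.truncn (2 * M / e).
pose c (k : 'I_m.+1) : R := k%:R * e - M.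
pose A (k : 'I_m.+1) := h @^-1` `[c k, c k + e[.
exists (fun w => \sum_(k < m.+1) c k * \1_(A k) w).
  by exists m.+1, c, A; split => // k; apply: Fh; exact: measurable_itv.
move=> w; have /andP[hwM hMw] : - M <= h w <= M by rewrite -ler_norml.
pose x := (h w + M) / e.
have x0 : 0 <= x by apply: divr_ge0; [lra | exact: ltW].
have ltm : (Num.truncn x < m.+1)%N.
  rewrite ltnS truncn_le_nat (le_lt_trans _ (truncnS_gt _)) // ler_pM2r ?invr_gt0 //.
  lra.
pose t := Ordinal ltm.
have memA k : (w \in A k) = (c k <= h w < c k + e).
  by rewrite /A; apply/idP/idP; rewrite in_setE /= in_itv.
have inA k : (w \in A k) = (k == t).
  rewrite memA -val_eqE /= eq_sym truncn_eq // /c /x.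
  rewrite ler_pdivlMr // ltr_pdivrMr // -natr1 mulrDl mul1r.
  by congr (_ && _); apply/idP/idP => ?; lra.
rewrite (bigD1 t) //= big1 => [|k /negbTE kt]; last by rewrite /indic inA kt mulr0.
have := memA t; rewrite inA eqxx /indic => /esym /andP[? ?].
by rewrite addr0 inA eqxx mulr1 ger0_norm; lra.
Qed.

Lemma bounded_measurable_wrt {F f M} : F `<=` measurable -> measurable_wrt F f ->
  (forall w, `|f w| <= M) -> bounded_measurable f.
Proof.
by move=> Fm Ff fM; split; [exact: measurable_wrt_measurable_fun Ff | exists M].
Qed.

Lemma bounded_measurable_of_step_fun {F f} : F `<=` measurable -> step_fun F f ->
  bounded_measurable f.
Proof.
by move=> Fm [n [c [A [FA ->]]]]; apply: bounded_measurable_step_fun => i; apply/Fm/FA.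
Qed.

Lemma expectR_mul_of_step_fun {F g} : F `<=` measurable -> bounded_measurable g ->
  (forall f, step_fun F f ->
     expectR P (fun w => f w * g w) = expectR P f * expectR P g) ->
  forall f M, measurable_wrt F f -> (forall w, `|f w| <= M) ->
    expectR P (fun w => f w * g w) = expectR P f * expectR P g.
Proof.
move=> Fm bg gstep f M Ff fM; have bf := bounded_measurable_wrt Fm Ff fM.
have [_ [N gN]] := bg; have N0 : 0 <= N by rewrite (le_trans _ (gN point)).
apply/eqP; rewrite -subr_eq0 -normr_le0; apply/ler_addgt0Pr => e e0; rewrite add0r.
have eps0 : 0 < e / (2 * N + 1) by rewrite divr_gt0 //; lra.
have [f' sf' ff'] := step_fun_approx Ff fM eps0.
have bf' := bounded_measurable_of_step_fun Fm sf'.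
have bdg := bounded_measurableB bf bf'.
have -> : expectR P (fun w => f w * g w) - expectR P f * expectR P g =
    expectR P (fun w => (f w - f' w) * g w) -
    expectR P (fun w => f w - f' w) * expectR P g.
  under [in RHS]eq_fun do rewrite mulrBl.
  rewrite !expectRB ?(gstep _ sf') //; first ring.
  - exact: (bounded_measurableM bf bg).
  - exact: (bounded_measurableM bf' bg).
have h1 : `|expectR P (fun w => (f w - f' w) * g w)| <= e / (2 * N + 1) * N.
  apply: normr_expectR_le => [|w]; first exact: bounded_measurableM.
  by rewrite normrM ler_pM.
have h2 : `|expectR P (fun w => f w - f' w) * expectR P g| <= e / (2 * N + 1) * N.
  by rewrite normrM ler_pM // normr_expectR_le.
rewrite (le_trans (ler_normB _ _)) // (le_trans (lerD h1 h2)) //.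
have : e / (2 * N + 1) * (2 * N + 1) = e by rewrite mulfVK //; lra.
nra.
Qed.

End step_functions.

Section independent_sigma_algebras.
Context {d : measure_display} {T : measurableType d} {R : realType}.
Variables (P : probability T R) (F1 F2 : set (set T)).
Hypotheses (F1m : F1 `<=` measurable) (F2m : F2 `<=` measurable).
Hypothesis F12_indep : forall A B, F1 A -> F2 B -> P (A `&` B) = (P A * P B)%E.

Lemma expectR_mul_step_fun_indep f g : step_fun F1 f -> step_fun F2 g ->
  expectR P (fun w => f w * g w) = expectR P f * expectR P g.
Proof.
move=> [m [b [A [FA ->]]]] [n [c [B [FB ->]]]].
have mA i : measurable (A i) by apply/F1m/FA.
have mB j : measurable (B j) by apply/F2m/FB.
have mAB i j : measurable (A i `&` B j) by exact: measurableI.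
have -> : (fun w => (\sum_(i < m) b i * \1_(A i) w) * (\sum_(j < n) c j * \1_(B j) w)) =
    fun w => \sum_(i < m) \sum_(j < n) (b i * c j) * \1_(A i `&` B j) w.
  apply: funext => w; rewrite big_distrl; apply: eq_bigr => i _.
  by rewrite big_distrr; apply: eq_bigr => j _; rewrite indicI mulrACA.
rewrite expectR_sum => [|i]; last exact: bounded_measurable_step_fun.
rewrite !expectR_step_fun // big_distrl; apply: eq_bigr => i _.
rewrite expectR_step_fun // big_distrr; apply: eq_bigr => j _.
by rewrite F12_indep // fineM ?fin_num_measure // mulrACA.
Qed.

Lemma expectR_mul_indep f g M N : measurable_wrt F1 f -> measurable_wrt F2 g ->
  (forall w, `|f w| <= M) -> (forall w, `|g w| <= N) ->
  expectR P (fun w => f w * g w) = expectR P f * expectR P g.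
Proof.
move=> Ff Fg fM gN.
have step_f g' : step_fun F2 g' ->
    expectR P (fun w => g' w * f w) = expectR P g' * expectR P f.
  move=> sg'; under eq_fun do rewrite mulrC; rewrite mulrC.
  apply: (expectR_mul_of_step_fun P F1m _ _ _ _ Ff fM).
    exact: bounded_measurable_of_step_fun F2m sg'.
  by move=> f' sf'; exact: expectR_mul_step_fun_indep.
under eq_fun do rewrite mulrC; rewrite mulrC.
exact: (expectR_mul_of_step_fun P F2m (bounded_measurable_wrt F1m Ff fM) step_f
  _ _ Fg gN).
Qed.

End independent_sigma_algebras.

Section independent_family.
Context {d : measure_display} {T : measurableType d} {R : realType}.
Variables (P : probability T R) (S : finType) (F : S -> set (set T)).
Hypothesis F_sigma : forall x, sigma_algebra setT (F x).
Hypothesis Fm : forall x, F x `<=` measurable.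
Hypothesis F_indep : forall E : S -> set T, (forall x, F x (E x)) ->
  P (\bigcap_(x in [set: S]) E x) = (\prod_(x : S) P (E x))%E.
Variable s : S.

Let others := [set E | exists x, x != s /\ F x E].

Let others_cap := [set X | exists E : S -> set T,
  [/\ forall x, F x (E x), E s = setT & X = \bigcap_(x in [set: S]) E x]].

Let indep_of_s := [set B | measurable B /\
  forall A, F s A -> P (A `&` B) = (P A * P B)%E].

Let F_setT x : F x setT.
Proof. by have [] := sigma_algebra_dynkin (F_sigma x). Qed.

Let F_setI x A B : F x A -> F x B -> F x (A `&` B).
Proof.
by have /(sigma_algebraP (fun _ _ _ _ => I))[_ _ _ FI] := F_sigma x; apply: FI.
Qed.

Let others_cap_setI : setI_closed others_cap.
Proof.
move=> _ _ [E [FE Es ->]] [E' [FE' E's ->]].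
exists (fun x => E x `&` E' x); split.
- by move=> x; apply: F_setI.
- by rewrite Es E's setIT.
- by rewrite -bigcapI.
Qed.

Let others_cap_indep : others_cap `<=` indep_of_s.
Proof.
move=> _ [E [FE Es ->]]; split.
  by apply: fin_bigcap_measurable => [|x _]; [exact: finite_finset | exact: Fm (FE x)].
move=> A FA; pose EA x := if x == s then A else E x.
have FEA x : F x (EA x) by rewrite /EA; case: eqP => [->|].
have -> : A `&` \bigcap_(x in [set: S]) E x = \bigcap_(x in [set: S]) EA x.
  apply/seteqP; split => [w [Aw Ew] x _|w EAw].
    by rewrite /EA; case: eqP => // _; exact: Ew.
  split; first by have := EAw s I; rewrite /EA eqxx.
  by move=> x _; have := EAw x I; rewrite /EA; case: eqP => // ->; rewrite Es.
rewrite !F_indep // (bigD1 s) //= [in RHS](bigD1 s) //= Es probability_setT mul1e.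
by rewrite /EA eqxx; congr (_ * _)%E; apply: eq_bigr => x /negbTE ->.
Qed.

Let indep_of_s_setD : setSD_closed indep_of_s.
Proof.
move=> A B BA [mA AB] [mB BB]; split=> [|C FC]; first exact: measurableD.
have mC := Fm _ _ FC.
have finP X : measurable X -> (P X < +oo)%E.
  by move=> mX; rewrite (le_lt_trans (probability_le1 P mX)) ?ltry.
have mCA := measurableI _ _ mC mA; have mCB := measurableI _ _ mC mB.
have PAB : P (A `\` B) = (P A - P B)%E by rewrite measureD ?finP ?(setIidr BA).
have PCAB : P (C `&` (A `\` B)) = (P (C `&` A) - P (C `&` B))%E.
  by rewrite setIDA measureD ?finP // -setIA (setIidr BA).
rewrite PAB PCAB AB // BB // -(fineK (fin_num_measure P _ mA)).
by rewrite -(fineK (fin_num_measure P _ mB)) -(fineK (fin_num_measure P _ mC)) muleBr.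
Qed.

Let indep_of_s_ndseq : ndseq_closed indep_of_s.
Proof.
move=> E ndE IE; have mE x : measurable (E x) by have [] := IE x.
split=> [|C FC]; first exact: bigcupT_measurable.
have mC := Fm _ _ FC.
have PCE : (fun n => (P C * P (E n))%E) @ \oo --> P (C `&` \bigcup_n E n).
  have -> : (fun n => (P C * P (E n))%E) = P \o (fun n => C `&` E n).
    by apply/funext => n /=; rewrite (IE n).2.
  rewrite setI_bigcupr; apply: nondecreasing_cvg_mu => [n||m n mn].
  - exact: measurableI.
  - by apply: bigcupT_measurable => n; exact: measurableI.
  - by apply/subsetPset; apply: setIS; apply/subsetPset; exact: ndE.
have PE : (P \o E) n @[n --> \oo] --> P (\bigcup_n E n).
  by apply: nondecreasing_cvg_mu => //; exact: bigcupT_measurable.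
have PCPE : (fun n => (P C * P (E n))%E) @ \oo --> (P C * P (\bigcup_n E n))%E.
  apply: cvgeM PE; last exact: cvg_cst.
  by rewrite mule_def_fin // fin_num_measure //; exact: bigcupT_measurable.
exact: cvg_unique PCE PCPE.
Qed.

Let indep_of_s_lambda : lambda_system setT indep_of_s.
Proof.
split; [by []| |exact: indep_of_s_setD|exact: indep_of_s_ndseq].
by split=> // A _; rewrite setIT probability_setT mule1.
Qed.

Lemma indep_sigma_others A B : F s A -> <<s others >> B ->
  P (A `&` B) = (P A * P B)%E.
Proof.
move=> FA oB; have others_sub : others `<=` others_cap.
  move=> E [x [xs FE]]; exists (fun y => if y == x then E else setT); split.
  - by move=> y; case: eqP => [->|_] //; exact: F_setT.
  - by rewrite eq_sym (negbTE xs).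
  - apply/seteqP; split => [w Ew y _|w Ew]; first by case: eqP.
    by have := Ew x I; rewrite eqxx.
have := lambda_system_subset others_cap_setI indep_of_s_lambda others_cap_indep.
by move=> /(_ (fun _ _ => subsetT _) B (sub_sigma_algebra2 others_sub oB)) [_ ->].
Qed.

End independent_family.

Lemma normr_avg_le {R : realType} {I : finType} (w g : I -> R) M :
  (forall i, 0 <= w i) -> \sum_i w i = 1 -> (forall i, `|g i| <= M) ->
  `|\sum_i w i * g i| <= M.
Proof.
move=> w0 w1 gM; rewrite (le_trans (ler_norm_sum _ _ _)) //.
rewrite -[leRHS]mul1r -w1 mulr_suml; apply: ler_sum => i _.
by rewrite normrM ger0_norm // ler_wpM2l.
Qed.

Lemma normr_transition_le1 {R : realType} {S A : finType} (q : S -> A -> S -> R) x a y :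
  is_transition q -> `|q x a y| <= 1.
Proof.
move=> [q0 q1]; rewrite ger0_norm // -(q1 x a) (bigD1 y) //= lerDl.
exact: sumr_ge0.
Qed.

Lemma transition_eq0_of_eq1 {R : realType} {S A : finType} (q : S -> A -> S -> R) x a y :
  is_transition q -> q x a x = 1 -> y != x -> q x a y = 0.
Proof.
move=> [q0 q1] qxx yx; have : \sum_(z | z != x) q x a z = 0.
  by have := q1 x a; rewrite (bigD1 x) //= qxx; lra.
by move/psumr_eq0P; apply.
Qed.

Definition rbound {R : realType} {S A : finType} (r : S -> A -> R) : R :=
  \sum_(x : S) \sum_(a : A) `|r x a|.

Lemma normr_le_rbound {R : realType} {S A : finType} (r : S -> A -> R) x a :
  `|r x a| <= rbound r.
Proof.
rewrite /rbound (bigD1 x) //= (bigD1 a) //= -addrA lerDl.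
by apply: addr_ge0; apply: sumr_ge0 => *; rewrite ?sumr_ge0.
Qed.

Section value_bound.
Context {R : realType} {S A : finType}.
Variables (pi : S -> A -> R) (r : S -> A -> R) (gamma : R).
Hypotheses (pi_policy : is_policy pi) (gamma01 : 0 <= gamma < 1).

Definition value_term (q : S -> A -> S -> R) (y : S) (h : nat) : R :=
  gamma ^+ h * iter h (step_pi pi q) (rew_pi pi r) y.

Lemma valueE q y : value pi r gamma q y = limn (series (value_term q y)).
Proof. by rewrite /value; congr (limn _); apply/funext => n; rewrite seriesEord. Qed.

Lemma normr_iter_step_pi_le q h x : is_transition q ->
  `|iter h (step_pi pi q) (rew_pi pi r) x| <= rbound r.
Proof.
have [pi0 pi1] := pi_policy; move=> [q0 q1].
elim: h x => [|h IHh] x /=; first exact/normr_avg_le/normr_le_rbound.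
by apply: normr_avg_le => // a; apply: normr_avg_le.
Qed.

Lemma normr_value_term_le q y h : is_transition q ->
  `|value_term q y h| <= geometric (rbound r) gamma h.
Proof.
have [gamma0 _] := andP gamma01.
move=> tq; rewrite /value_term normrM ger0_norm ?exprn_ge0 // mulrC /=.
by rewrite ler_wpM2r ?exprn_ge0 ?normr_iter_step_pi_le.
Qed.

Let normr_gamma_lt1 : `|gamma| < 1.
Proof. by have [gamma0 gamma1] := andP gamma01; rewrite ger0_norm. Qed.

Lemma is_cvg_normed_value_series q y : is_transition q ->
  cvgn [normed series (value_term q y)].
Proof.
move=> tq; apply: (series_le_cvg _ _ (fun h => normr_value_term_le q y h tq)) => //.
- by move=> h; rewrite (le_trans _ (normr_value_term_le q y h tq)).
- exact: is_cvg_geometric_series.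
Qed.

Lemma is_cvg_value_series q y : is_transition q -> cvgn (series (value_term q y)).
Proof. by move=> tq; apply/normed_cvg/is_cvg_normed_value_series. Qed.

Lemma normr_value_le q y : is_transition q ->
  `|value pi r gamma q y| <= rbound r / (1 - gamma).
Proof.
move=> tq; rewrite valueE.
rewrite (le_trans (lim_series_norm (is_cvg_normed_value_series q y tq))) //.
rewrite -(cvg_lim _ (@cvg_geometric_series _ (rbound r) _ normr_gamma_lt1)) //.
apply: lim_series_le => //; last exact: (normr_value_term_le q y ^~ tq).
- exact: is_cvg_normed_value_series.
- exact: is_cvg_geometric_series.
Qed.

End value_bound.

Section value_measurable.
Context {R : realType} {S A : finType} {d : measure_display} {U : measurableType d}.
Variables (pi r : S -> A -> R) (gamma : R) (q : U -> S -> A -> S -> R).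
Hypotheses (pi_policy : is_policy pi) (gamma01 : 0 <= gamma < 1).
Hypothesis q_transition : forall w, is_transition (q w).
Variable closed : set S.
Hypothesis closed_step : forall w x a y, closed x -> 0 < q w x a y -> closed y.
Hypothesis closed_measurable : forall x a y, closed x -> (exists w, 0 < q w x a y) ->
  measurable_fun setT (fun w => q w x a y).

Lemma measurable_iter_step_pi h x : closed x ->
  measurable_fun setT (fun w => iter h (step_pi pi (q w)) (rew_pi pi r) x).
Proof.
elim: h x => [|h IHh] x cx /=; first exact: measurable_cst.
apply: measurable_sum => a; apply: measurable_funM; first exact: measurable_cst.
apply: measurable_sum => y.
have [[w qw]|q0] := pselect (exists w, 0 < q w x a y).
  apply: measurable_funM; last exact: IHh (closed_step _ _ _ _ cx qw).
  by apply: closed_measurable cx _; exists w.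
have q0' w : q w x a y = 0.
  apply/eqP; rewrite eq_le (q_transition w).1 andbT leNgt.
  by apply/negP => qw; apply: q0; exists w.
by under eq_fun do rewrite q0' mul0r; exact: measurable_cst.
Qed.

Lemma measurable_value y : closed y ->
  measurable_fun setT (fun w => value pi r gamma (q w) y).
Proof.
move=> cy.
apply: (measurable_fun_cvg (h := fun n w => series (value_term pi r gamma (q w) y) n)).
  move=> n; under eq_fun do rewrite seriesEord.
  apply: measurable_sum => h; apply: measurable_funM; first exact: measurable_cst.
  exact: measurable_iter_step_pi.
move=> w _; rewrite valueE.
exact: (is_cvg_value_series _ _ _ pi_policy gamma01 _ y (q_transition w)).
Qed.

End value_measurable.

Lemma weighted_sum_sq_sub_var {R : realType} {I : finType} (w g : I -> R) :
  \sum_i w i = 1 ->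
  \sum_i w i * g i ^+ 2 - \sum_i w i * (g i - \sum_j w j * g j) ^+ 2 =
    (\sum_i w i * g i) ^+ 2.
Proof.
move=> w1; set m := \sum_j w j * g j.
rewrite [X in _ - X]
  (eq_bigr (fun i => w i * g i ^+ 2 - 2 * m * (w i * g i) + m ^+ 2 * w i)).
  by rewrite big_split sumrB /= -!mulr_sumr w1 -/m; ring.
by move=> i _; ring.
Qed.

Lemma sum_sq_sub_var_pi {R : realType} {S A : finType} (pi : S -> A -> R)
    (q : S -> A -> S -> R) s (f : S -> R) :
  \sum_a \sum_y pi s a * q s a y = 1 ->
  \sum_a \sum_y pi s a * q s a y * f y ^+ 2 - var_pi pi q s f =
    (\sum_a \sum_y pi s a * q s a y * f y) ^+ 2.
Proof.
rewrite /var_pi !pair_big /=.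
exact: (weighted_sum_sq_sub_var (fun u => pi s u.1 * q s u.1 u.2) (fun u => f u.2)).
Qed.

Lemma expectation_cond_exp {d : measure_display} {T : measurableType d} {R : realType}
    {P : probability T R} {F : set (set T)} {Y Z : T -> R} :
  F setT -> is_cond_exp P F Y Z -> ('E_P[Z] = 'E_P[Y])%E.
Proof. by move=> FT [_ [_ YZ]]; rewrite unlock YZ. Qed.

Lemma sigma_trans_setT {R : realType} {S A : finType} {d : measure_display}
    {T : measurableType d} (p : T -> S -> A -> S -> R) x :
  sigma_trans p x setT.
Proof.
by rewrite /sigma_trans; set G := (X in <<s X >>);
  case: (sigma_algebra_dynkin (smallest_sigma_algebra setT G)).
Qed.

Section random_mdp.
Context {R : realType} {S A : finType} {d : measure_display} {T : measurableType d}.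
Variables (P : probability T R) (p : T -> S -> A -> S -> R).
Hypothesis p_transition : forall w, is_transition (p w).
Hypothesis p_measurable : forall x a y, measurable_fun setT (fun w => p w x a y).
Hypothesis p_indep : indep_transitions P p.
Hypothesis p_acyclic : acyclic_mdp p.
Variable s : S.

Lemma sigma_trans_measurable x : sigma_trans p x `<=` measurable.
Proof.
apply: smallest_sub; first exact: sigma_algebra_measurable.
by move=> _ [a [y [B [mB ->]]]]; rewrite -[_ @^-1` B]setTI; exact: p_measurable.
Qed.

Lemma measurable_wrt_sigma_trans a y :
  measurable_wrt (sigma_trans p s) (fun w => p w s a y).
Proof. by move=> B mB; apply: sub_sigma_algebra; exists a, y, B. Qed.

Let others := [set E | exists x, x != s /\ sigma_trans p x E].

Let others_measurable : <<s others >> `<=` measurable.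
Proof.
apply: smallest_sub; first exact: sigma_algebra_measurable.
by move=> E [x [_ /sigma_trans_measurable]].
Qed.

Let indep_others X Y : sigma_trans p s X -> <<s others >> Y ->
  P (X `&` Y) = (P X * P Y)%E.
Proof.
apply: indep_sigma_others => // x; first exact: smallest_sigma_algebra.
exact: sigma_trans_measurable.
Qed.

(* measurable_wrt <<s others >> is plain measurability on this alias *)
Let Others := g_sigma_algebraType others.

Let measurable_wrt_others (g : T -> R) :
  measurable_fun (setT : set Others) g -> measurable_wrt (<<s others >>) g.
Proof. by move=> mg B mB; rewrite -[_ @^-1` B]setTI; exact: mg. Qed.

Let measurable_others x a y : x != s ->
  measurable_fun (setT : set Others) (fun w => p w x a y).
Proof.
move=> xs _ B mB; rewrite setTI; apply: sub_sigma_algebra; exists x; split => //.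
by apply: sub_sigma_algebra; exists a, y, B.
Qed.

Lemma sum_pbar a : \sum_y pbar P p s a y = 1.
Proof.
rewrite -(expectR_cst P 1) -expectR_sum => [|y]; last first.
  split; [exact: p_measurable | exists 1 => w; exact: normr_transition_le1].
by congr expectR; apply/funext => w; rewrite (p_transition w).2.
Qed.

Variables (pi r : S -> A -> R) (gamma : R).
Hypotheses (pi_policy : is_policy pi) (gamma01 : 0 <= gamma < 1).

Lemma measurable_wrt_value_unreachable y : ~~ connect (mdp_edge p) y s ->
  measurable_wrt (<<s others >>) (fun w => value pi r gamma (p w) y).
Proof.
move=> ys; apply: measurable_wrt_others.
apply: (@measurable_value _ _ _ _ Others pi r gamma p pi_policy gamma01 p_transition
  (fun z => ~~ connect (mdp_edge p) z s) _ _ y ys) => [w x a z xs pz|x a z xs _].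
  have [->//|zx] := eqVneq z x; apply: contra xs => zs.
  apply: connect_trans zs; apply/connect1/asboolP.
  by split; [rewrite eq_sym | exists w, a].
by apply: measurable_others; apply: contraNneq xs => ->; exact: connect0.
Qed.

Lemma measurable_wrt_value_absorbing : (forall w a, p w s a s = 1) ->
  measurable_wrt (<<s others >>) (fun w => value pi r gamma (p w) s).
Proof.
move=> pss; apply: measurable_wrt_others.
apply: (@measurable_value _ _ _ _ Others pi r gamma p pi_policy gamma01 p_transition
  (fun z => z = s) _ _ s erefl) => [w x a z -> pz|x a z -> _].
  apply/eqP; apply: contraTT pz => zs.
  by rewrite (transition_eq0_of_eq1 _ _ _ _ (p_transition w) (pss w a) zs) ltxx.
have [-> | zs] := eqVneq z s.
  by under eq_fun do rewrite pss; exact: measurable_cst.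
have p0 w := transition_eq0_of_eq1 _ _ _ _ (p_transition w) (pss w a) zs.
by under eq_fun do rewrite p0; exact: measurable_cst.
Qed.

Lemma measurable_wrt_value_succ {w0 a y} : 0 < p w0 s a y ->
  measurable_wrt (<<s others >>) (fun w => value pi r gamma (p w) y).
Proof.
move=> py; have [ys|ys] := eqVneq y s.
  rewrite ys in py *; apply: measurable_wrt_value_absorbing.
  exact: p_acyclic.2 _ _ _ py.
apply: measurable_wrt_value_unreachable; apply: (p_acyclic.1 s); apply/asboolP.
by split; [rewrite eq_sym | exists w0, a].
Qed.

Lemma expectR_trans_value a y :
  expectR P (fun w => p w s a y * value pi r gamma (p w) y) =
    pbar P p s a y * Vbar P p pi r gamma y.
Proof.
have [[w0 py]|p0] := pselect (exists w, 0 < p w s a y).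
  apply: (expectR_mul_indep _ _ _ (sigma_trans_measurable s) others_measurable
    indep_others _ _ _ _ (measurable_wrt_sigma_trans a y) (measurable_wrt_value_succ py)).
  - by move=> w; exact: normr_transition_le1.
  - by move=> w; apply: normr_value_le => //; exact: p_transition.
have p0' w : p w s a y = 0.
  apply/eqP; rewrite eq_le (p_transition w).1 andbT leNgt.
  by apply/negP => pw; apply: p0; exists w.
change (pbar P p s a y) with (expectR P (fun w => p w s a y)).
under eq_fun do rewrite p0' mul0r.
by rewrite (funext p0') !expectR_cst mul0r.
Qed.

Lemma sum_pi_pbar : \sum_a \sum_y pi s a * pbar P p s a y = 1.
Proof.
rewrite -(pi_policy.2 s); apply: eq_bigr => a _.
by rewrite -mulr_sumr sum_pbar mulr1.
Qed.

Lemma bounded_measurable_value y :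
  bounded_measurable (fun w => value pi r gamma (p w) y).
Proof.
split; last by exists (rbound r / (1 - gamma)) => w; exact: normr_value_le.
exact: (@measurable_value _ _ _ _ _ pi r gamma p pi_policy gamma01 p_transition setT).
Qed.

Lemma expectR_one_step_value :
  expectR P (fun w => \sum_a \sum_y pi s a * p w s a y * value pi r gamma (p w) y) =
    \sum_a \sum_y pi s a * pbar P p s a y * Vbar P p pi r gamma y.
Proof.
have bpV a y : bounded_measurable (fun w => p w s a y * value pi r gamma (p w) y).
  apply: bounded_measurableM (bounded_measurable_value y).
  by split; [exact: p_measurable | exists 1 => w; exact: normr_transition_le1].
under eq_fun do under eq_bigr do under eq_bigr do rewrite -mulrA.
rewrite expectR_sum => [|a]; last first.
  by apply: bounded_measurable_sum => y; exact: bounded_measurableZl.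
apply: eq_bigr => a _; rewrite expectR_sum => [|y]; last exact: bounded_measurableZl.
by apply: eq_bigr => y _; rewrite expectRZl // expectR_trans_value mulrA.
Qed.

End random_mdp.

Theorem lemma6 (R : realType) (S A : finType) (d : measure_display)
  (T : measurableType d) (P : probability T R)
  (r : S -> A -> R) (gamma : R) (p : T -> S -> A -> S -> R) :
  0 <= gamma < 1 ->
  (forall w, is_transition (p w)) ->
  (forall x a y, measurable_fun setT (fun w => p w x a y)) ->
  indep_transitions P p ->
  acyclic_mdp p ->
  forall (s : S) (pi : S -> A -> R), is_policy pi ->
  forall Z : T -> R,
    is_cond_exp P (sigma_trans p s)
      (fun w => \sum_(a : A) \sum_(y : S) pi s a * p w s a y * value pi r gamma (p w) y)
      Z ->
  (fine ('E_P[Z])%E) ^+ 2 =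
    \sum_(a : A) \sum_(y : S) pi s a * pbar P p s a y * (Vbar P p pi r gamma y) ^+ 2
    - var_pi pi (pbar P p) s (Vbar P p pi r gamma).
Proof.
move=> gamma01 p_transition p_measurable p_indep p_acyclic s pi pi_policy Z condZ.
rewrite sum_sq_sub_var_pi ?sum_pi_pbar //.
rewrite (expectation_cond_exp (sigma_trans_setT p s) condZ) -/(expectR P _).
by rewrite expectR_one_step_value.
Qed.
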